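(* Let $X$ be a Banach space, $F:\mathbb{R}^{n+1}_+\to X$ strongly measurable, $q\in(0,\infty)$ and $\rho>1$. Define the stopping time $\tau(x):=\sup\{\tau>0:A(F|\tau)(x)\le\rho\,C_q(F)(x)\}$. Then for every ball $B\subset\mathbb{R}^n$, $$|B\cap\{\tau>r(B)\}|\ge(1-\rho^{-q})|B|.$$
   Context: $\Gamma^h(x):=\{(y,t)\in\mathbb{R}^{n+1}_+:|y-x|<t<h\}$. Gauss norm: $H=L^2(\mathbb{R}^{n+1}_+,\,dy\,dt/t^{n+1})$, $(\gamma_j)$ independent complex standard Gaussians; for $T\in\mathcal{L}(H,X)$, $\|T\|_{\gamma(H,X)}:=\|\sum_j\gamma_jTe_j\|_{L^2(\Omega;X)}$ when this converges for an orthonormal basis $(e_j)$. For strongly measurable weakly-$L^2$ $\Phi:\mathbb{R}^{n+1}_+\to X$, $I_\Phi h:=$ Pettis-$\int\Phi h\,dy\,dt/t^{n+1}$, $\|\Phi\|_{\gamma(X)}:=\|I_\Phi\|_{\gamma(H,X)}$, and $\infty$ otherwise. $A(F|h)(x):=\|F1_{\Gamma^h(x)}\|_{\gamma(X)}$, and $C_q(F)(x):=\sup_{B\ni x}\big(\frac1{|B|}\int_BA(F|r(B))(y)^q\,dy\big)^{1/q}$ over open balls $B\ni x$ of radius $r(B)$. *)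

From HB Require Import structures.
From mathcomp Require Import all_boot all_order all_algebra.
From mathcomp Require Import all_classical all_reals all_analysis.
From mathcomp Require Import complex.

Set Implicit Arguments.
Unset Strict Implicit.
Unset Printing Implicit Defensive.

Import Order.TTheory GRing.Theory Num.Theory.
Import numFieldNormedType.Exports.

Local Open Scope classical_set_scope.
Local Open Scope ring_scope.

Definition cre {R : realType} (z : R[i]) : R := complex.Re z.
Definition cim {R : realType} (z : R[i]) : R := complex.Im z.
Definition cabs {R : realType} (z : R[i]) : R := Num.sqrt (cre z ^+ 2 + cim z ^+ 2).
(* the norm of a (complex) Banach space, as a real number
   (MathComp-Analysis stores it in the scalar field R[i], with zero
    imaginary part) *)
Definition xnorm {R : realType} {X : normedModType R[i]} (x : X) : R := cre `|x|.

Definition euc_norm {R : realType} {I : finType} (x : I -> R) : R :=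
  Num.sqrt (\sum_i x i ^+ 2).

Definition box {R : realType} {I : finType} (a b : I -> R) : set (I -> R) :=
  [set x | forall i, a i <= x i <= b i].

Definition box_vol {R : realType} {I : finType} (a b : I -> R) : R :=
  \prod_i (b i - a i).

Definition lebout {R : realType} {I : finType} (E : set (I -> R)) : \bar R :=
  ereal_inf [set s : \bar R | exists (a b : nat -> I -> R),
    [/\ (forall k i, a k i <= b k i),
        E `<=` \bigcup_k box (a k) (b k) &
        s = (\sum_(0 <= k <oo) (box_vol (a k) (b k))%:E)%E]].

Definition leb_meas {R : realType} {I : finType} (E : set (I -> R)) : Prop :=
  forall A : set (I -> R), lebout A = (lebout (A `&` E) + lebout (A `&` ~` E))%E.

(* Lebesgue integral of a nonnegative function on R^I (layer-cake formula) *)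
Definition lint {R : realType} {I : finType} (g : (I -> R) -> \bar R) : \bar R :=
  (\int[@lebesgue_measure R]_(s in [set s : R | (0 <= s)%R])
      lebout [set x | (s%:E < g x)%E])%E.

(* The upper half space R^{n+1}_+ = R^n x (0,oo), with measure             *)
(* dy dt / t^{n+1}.  A point of R^{n+1} is z : option 'I_n -> R,            *)
(* with y = (z (Some i))_i and t = z None.  Functions on the half space     *)
(* are written curried: (y, t) |-> f y t.                                   *)

Definition hs_y {R : realType} {n : nat} (z : option 'I_n -> R) : 'I_n -> R :=
  fun i => z (Some i).

Definition hs_setmeas {R : realType} (n : nat) (S : ('I_n -> R) -> R -> Prop) :=
  leb_meas [set z : option 'I_n -> R | 0 < z None /\ S (hs_y z) (z None)].

Definition hs_rmeas {R : realType} (n : nat) (f : ('I_n -> R) -> R -> R) :=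
  forall s : R, hs_setmeas (fun y t => s < f y t).

Definition hs_cmeas {R : realType} (n : nat) (f : ('I_n -> R) -> R -> R[i]) :=
  hs_rmeas (fun y t => cre (f y t)) /\ hs_rmeas (fun y t => cim (f y t)).

Definition hsint {R : realType} (n : nat) (g : ('I_n -> R) -> R -> \bar R) : \bar R :=
  lint (fun z : option 'I_n -> R =>
    if 0 < z None then (g (hs_y z) (z None) * ((z None) ^- n.+1)%:E)%E else 0%E).

Definition hsint_r {R : realType} (n : nat) (f : ('I_n -> R) -> R -> R) : R :=
  fine (hsint (fun y t => (Num.max (f y t) 0)%:E)) -
  fine (hsint (fun y t => (Num.max (- f y t) 0)%:E)).

Definition hsint_c {R : realType} (n : nat) (f : ('I_n -> R) -> R -> R[i]) : R[i] :=
  Complex (hsint_r (fun y t => cre (f y t))) (hsint_r (fun y t => cim (f y t))).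

Definition L2H {R : realType} (n : nat) (h : ('I_n -> R) -> R -> R[i]) : Prop :=
  hs_cmeas h /\ (hsint (fun y t => ((cabs (h y t)) ^+ 2)%:E) < +oo)%E.

Definition hinner {R : realType} (n : nat) (h1 h2 : ('I_n -> R) -> R -> R[i]) : R[i] :=
  hsint_c (fun y t => h1 y t * (h2 y t)^*).

(* orthonormal basis (e_j)_j of H (H is separable and infinite dimensional) *)
Definition ONB {R : realType} (n : nat) (e : nat -> ('I_n -> R) -> R -> R[i]) : Prop :=
  [/\ (forall j, L2H (e j)),
      (forall i j, hinner (e i) (e j) = (i == j)%:R) &
      (forall h, L2H h -> (forall j, hinner h (e j) = 0) ->
         hsint (fun y t => ((cabs (h y t)) ^+ 2)%:E) = 0%E)].

Definition is_dual {R : realType} {X : normedModType R[i]} (f : X -> R[i]) : Prop :=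
  (forall (a : R[i]) (x y : X), f (a *: x + y) = a * f x + f y) /\ continuous (f : X -> (R[i] : numFieldType)).

Definition hs_simple {R : realType} {X : normedModType R[i]} (n : nat)
  (s : ('I_n -> R) -> R -> X) : Prop :=
  finite_set [set x : X | exists y t, 0 < t /\ x = s y t] /\
  (forall x : X, hs_setmeas (fun y t => s y t = x)).

Definition strongly_meas {R : realType} {X : normedModType R[i]} (n : nat)
  (F : ('I_n -> R) -> R -> X) : Prop :=
  exists s : nat -> ('I_n -> R) -> R -> X,
    (forall k, hs_simple (s k)) /\
    (forall y t, 0 < t -> s k y t @[k --> \oo] --> F y t).

Definition weakly_L2 {R : realType} {X : normedModType R[i]} (n : nat)
  (F : ('I_n -> R) -> R -> X) : Prop :=
  forall f : X -> R[i], is_dual f -> L2H (fun y t => f (F y t)).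

Definition pettis {R : realType} {X : normedModType R[i]} (n : nat)
  (Phi : ('I_n -> R) -> R -> X) (h : ('I_n -> R) -> R -> R[i]) (x : X) : Prop :=
  forall f : X -> R[i], is_dual f -> hsint_c (fun y t => f (Phi y t) * h y t) = f x.

Definition iid_std_gaussian {R : realType} {d : measure_display} {Omega : measurableType d}
  (P : probability Omega R) (g : nat -> Omega -> R) : Prop :=
  [/\ (forall k, measurable_fun setT (g k)),
      (forall k (A : set R), measurable A ->
         P (g k @^-1` A) = normal_prob 0 1 A) &
      (forall (s : seq nat) (A : nat -> set R), uniq s ->
         (forall k, measurable (A k)) ->
         P (\bigcap_(k in [set k | k \in s]) (g k @^-1` A k)) =
         (\big[*%E/1%E]_(k <- s) P (g k @^-1` A k))%E)].

(* gamma_j = (g_{2j} + i g_{2j+1}) / sqrt 2 : independent standard complex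
   Gaussians *)
Definition cgauss {R : realType} {Omega : Type} (g : nat -> Omega -> R) (j : nat)
  (w : Omega) : R[i] :=
  (real_complex R (g j.*2 w) + 'i * real_complex R (g j.*2.+1 w)) / real_complex R (Num.sqrt (2 : R)).

Definition gsum {R : realType} {X : normedModType R[i]} {Omega : Type}
  (g : nat -> Omega -> R) (x : nat -> X) (N : nat) (w : Omega) : X :=
  \sum_(j < N) cgauss g j w *: x j.

Definition EnormSq {R : realType} {X : normedModType R[i]} {d : measure_display}
  {Omega : measurableType d} (P : probability Omega R) (Y : Omega -> X) : \bar R :=
  (\int[P]_w ((xnorm (Y w)) ^+ 2)%:E)%E.

(* The possible values of ||Phi||_{gamma(X)} = ||I_Phi||_{gamma(H,X)}:
   Phi is strongly measurable, weakly L^2, the Pettis integrals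
   I_Phi h exist in X for all h in H, and for an orthonormal basis (e_j)
   and independent standard complex Gaussians (gamma_j), the series
   \sum_j gamma_j I_Phi e_j converges in L^2(Omega;X) (i.e. its partial sums
   are Cauchy in L^2(Omega;X), X being complete), v being the L^2(Omega;X)
   norm of its sum. *)
Definition gamma_values {R : realType} {X : completeNormedModType R[i]} (n : nat)
  (Phi : ('I_n -> R) -> R -> X) : set R :=
  [set v : R |
    [/\ strongly_meas Phi, weakly_L2 Phi,
        (forall h, L2H h -> exists x : X, pettis Phi h x) &
        exists (d : measure_display) (Omega : measurableType d)
               (P : probability Omega R) (g : nat -> Omega -> R)
               (e : nat -> ('I_n -> R) -> R -> R[i]) (x : nat -> X),
          [/\ iid_std_gaussian P g, ONB e,
              (forall j, pettis Phi (e j) (x j)),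
              (forall eps : R, 0 < eps -> exists N0 : nat, forall N M : nat,
                  (N0 <= N)%N -> (N0 <= M)%N ->
                  (EnormSq P (fun w => (gsum g x N w - gsum g x M w)%R) < eps%:E)%E) &
              (fun N => Num.sqrt (fine (EnormSq P (gsum g x N)))) @ \oo --> v]]].

(* ||Phi||_{gamma(X)} (+oo when Phi does not define a gamma-radonifying
   operator); the value does not depend on the choices of basis and
   Gaussian sequence, so the infimum is the common value. *)
Definition gamma_norm {R : realType} {X : completeNormedModType R[i]} (n : nat)
  (Phi : ('I_n -> R) -> R -> X) : \bar R :=
  ereal_inf [set v%:E | v in gamma_values Phi].

Definition cone {R : realType} (n : nat) (h : R) (x : 'I_n -> R) :
  ('I_n -> R) -> R -> Prop :=
  fun y t => euc_norm (fun i => y i - x i) < t /\ t < h.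

Definition Afun {R : realType} {X : completeNormedModType R[i]} (n : nat)
  (F : ('I_n -> R) -> R -> X) (h : R) (x : 'I_n -> R) : \bar R :=
  gamma_norm (fun y t => if `[< cone h x y t >] then F y t else 0).

Definition eball {R : realType} (n : nat) (c : 'I_n -> R) (r : R) : set ('I_n -> R) :=
  [set y | euc_norm (fun i => y i - c i) < r].

Definition Cq {R : realType} {X : completeNormedModType R[i]} (n : nat)
  (q : R) (F : ('I_n -> R) -> R -> X) (x : 'I_n -> R) : \bar R :=
  ereal_sup [set s : \bar R | exists (c : 'I_n -> R) (r : R),
    [/\ 0 < r, eball c r x &
        s = poweR ((fine (lebout (eball c r)))^-1%:E *
                   lint (fun y => if `[< eball c r y >]
                                  then poweR (Afun F r y) q else 0))%E q^-1]].

Definition stop_time {R : realType} {X : completeNormedModType R[i]} (n : nat)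
  (q rho : R) (F : ('I_n -> R) -> R -> X) (x : 'I_n -> R) : \bar R :=
  ereal_sup [set s%:E | s in [set s : R |
    0 < s /\ (Afun F s x <= rho%:E * Cq q F x)%E]].

From HB Require Import structures.
From mathcomp Require Import all_boot all_order all_algebra.
From mathcomp Require Import all_classical all_reals all_analysis.
From mathcomp Require Import complex.
From mathcomp Require Import ring lra.
Import Order.TTheory GRing.Theory Num.Theory.
Import numFieldNormedType.Exports.
Local Open Scope classical_set_scope.
Local Open Scope ring_scope.

(* If [stop_time x <= r] at a point [x] of [B = B(c, r)], then for every [s > r] we have
   [A(F|s)(x) > rho C_q(F)(x) >= rho (|B(c,s)|^-1 \int_B(c,s) A(F|s)^q)^(1/q)], because
   [B(c,s)] is one of the balls in the supremum defining [C_q(F)(x)].  Chebyshev's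
   inequality for [A(F|s)^q] on [B(c,s)] bounds the measure of these points by
   [rho^-q |B(c,s)| <= rho^-q (s/r)^n |B|]; letting [s] decrease to [r] gives
   [|B `&` {stop_time <= r}| <= rho^-q |B|], and the claim follows by subadditivity. *)

Section ge0_le_integral_nm.
Local Open Scope ereal_scope.
Context d (T : measurableType d) (R : realType) (mu : {measure set T -> \bar R}).

(* No measurability is needed: the integral of a nonnegative function is the supremum
   of the integrals of the simple functions below it. *)
Lemma ge0_le_integral_nm (D : set T) (f g : T -> \bar R) :
  (forall x, D x -> 0 <= f x) -> (forall x, D x -> f x <= g x) ->
  \int[mu]_(x in D) f x <= \int[mu]_(x in D) g x.
Proof.
move=> f0 fg.
have g0 x : D x -> 0 <= g x by move=> Dx; exact: le_trans (f0 x Dx) (fg x Dx).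
rewrite (ge0_integralE mu f0) (ge0_integralE mu g0).
apply: ereal_sup_le => _ [h hf <-]; exists h => // x.
exact: le_trans (hf x) (lee_restrict fg x).
Qed.

End ge0_le_integral_nm.

Lemma lte_poweR {R : realType} (a q : R) (x : \bar R) : 0 < q -> 0 <= a ->
  (a%:E < x)%E -> ((a `^ q)%:E < x `^ q)%E.
Proof.
move=> q0 a0; case: x => [x| _|]; last by rewrite ltNge leNye.
- rewrite !lte_fin => ax; apply: gt0_ltr_powR; rewrite ?inE ?nnegrE//.
  exact: le_trans a0 (ltW ax).
- by rewrite /= gt_eqF// ltry.
Qed.

Section lebesgue_outer_measure.
Context {R : realType} {I : finType}.
Local Open Scope ereal_scope.

Lemma box_vol_ge0 (a b : I -> R) : (forall i, a i <= b i)%R -> (0 <= box_vol a b)%R.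
Proof. by move=> ab; apply: prodr_ge0 => i _; rewrite subr_ge0. Qed.

Lemma lebout_ge0 (E : set (I -> R)) : 0 <= lebout E.
Proof.
apply: le_ereal_inf_tmp => _ [a [b [ab _ ->]]].
by apply: nneseries_ge0 => k _; rewrite lee_fin box_vol_ge0.
Qed.

Lemma le_lebout {A B : set (I -> R)} : A `<=` B -> lebout A <= lebout B.
Proof.
move=> AB; apply: ereal_inf_le_tmp => _ [a [b [ab BC ->]]].
by exists a, b; split => //; apply: subset_trans BC.
Qed.

Lemma lebout_EFin {E : set (I -> R)} : lebout E < +oo -> exists l, lebout E = l%:E.
Proof. by move: (lebout_ge0 E); case: (lebout E) => [l| |]// _ _; exists l. Qed.

Lemma lebout_cover_approx (A : set (I -> R)) (e : R) :
  (0 < e)%R -> lebout A < +oo -> exists a b : nat -> I -> R,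
  [/\ (forall k i, a k i <= b k i)%R, A `<=` \bigcup_k box (a k) (b k) &
      \sum_(k <oo) (box_vol (a k) (b k))%:E <= lebout A + e%:E].
Proof.
move=> e0 Aoo; have Afin : lebout A \is a fin_num by rewrite ge0_fin_numE// lebout_ge0.
have [_ [a [b [ab Acov ->]]] /ltW sum_le] := lb_ereal_inf_adherent e0 Afin.
by exists a, b.
Qed.

Lemma lebout_le_cover2 (A : set (I -> R)) (a b : nat -> nat -> I -> R) :
  (forall j k i, a j k i <= b j k i)%R ->
  A `<=` \bigcup_j \bigcup_k box (a j k) (b j k) ->
  lebout A <= \sum_(j <oo) \sum_(k <oo) (box_vol (a j k) (b j k))%:E.
Proof.
move=> ab Acov.
pose v (p : nat * nat) := (box_vol (a p.1 p.2) (b p.1 p.2))%:E.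
have v_ge0 p : 0 <= v p by rewrite lee_fin box_vol_ge0.
have <- : \esum_(p in setT) v p =
          \sum_(j <oo) \sum_(k <oo) (box_vol (a j k) (b j k))%:E.
  rewrite (_ : setT = \bigcup_j [set (j, k) | k in setT]); last first.
    by rewrite predeqE => -[j k]; split => // _; exists j => //; exists k.
  rewrite esum_bigcupT /=; last 2 first.
  - apply/trivIsetP => j j' _ _ jj'; rewrite predeqE => -[x y] /=.
    split => //= -[] [k _] [<- _] [k' _] [] /esym/eqP.
    by rewrite (negbTE jj').
  - by move=> [].
  rewrite -(image_id [set: nat]) -fun_true esum_pred_image//; last first.
    by move=> j _; exact: esum_ge0.
  apply: eq_eseriesr => j _.
  rewrite -(esum_pred_image v (pair j) predT)//=; last first.
    by move=> ? ? _ _; exact: (@can_inj _ _ _ snd).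
  congr esum; apply/seteqP; split => x.
  - by move=> [_ [k _ <-] <-]; exists k.
  - by move=> [k _ <-]; exists k => //; exists k.
have /card_esym/ppcard_eqP[f] := card_nat2.
rewrite /lebout; apply: ereal_inf_lbound => /=.
exists (fun k => a (f k).1 (f k).2), (fun k => b (f k).1 (f k).2); split.
- by move=> k i; exact: ab.
- move=> x /Acov [j _ [k _ jkx]]; exists (f^-1%FUN (j, k)) => //=.
  by rewrite invK ?inE.
rewrite (_ : \sum_(k <oo) _ = \sum_(k <oo) v (f k))//.
rewrite -(esum_pred_image v _ xpredT) ?[fun=> _]set_true//.
congr esum; apply/seteqP; split => // p _.
by exists (f^-1%FUN p) => //; rewrite invK ?inE.
Qed.

Lemma lebout_sigma_subadditive (A : nat -> set (I -> R)) :
  lebout (\bigcup_j A j) <= \sum_(j <oo) lebout (A j).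
Proof.
have [[j Ajoo]|] := pselect (exists j, lebout (A j) = +oo).
  by rewrite (nneseries_pinfty _ _ Ajoo) ?leey// => k _; exact: lebout_ge0.
move=> /forallNP Afin; apply/lee_addgt0Pr => e e0.
have ej0 j : (0 < e / (2 ^ j.+1)%:R)%R by rewrite divr_gt0// ltr0n expn_gt0.
have Alty j : lebout (A j) < +oo by rewrite ltey; apply/eqP.
have /choice[a Ha] j := lebout_cover_approx _ _ (ej0 j) (Alty j).
have /choice[b Hab] := Ha.
apply: (le_trans _ (@epsilon_trick R (lebout \o A) e xpredT
  (fun j => lebout_ge0 (A j)) (ltW e0))).
apply: (le_trans (@lebout_le_cover2 _ a b _ _)).
- by move=> j; case: (Hab j).
- by move=> x [j _ Ajx]; exists j => //; case: (Hab j) => _ + _; apply.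
apply: lee_nneseries => [j _ _|j _]; have [abj _ sumj] := Hab j => //.
by apply: nneseries_ge0 => k _; rewrite lee_fin box_vol_ge0.
Qed.

Lemma lebout_set0 (i0 : I) : lebout (@set0 (I -> R)) = 0.
Proof.
apply/eqP; rewrite eq_le lebout_ge0 andbT; apply: ereal_inf_lbound.
exists (fun _ _ => 0%R), (fun _ _ => 0%R); split => //.
by rewrite eseries0// => k _ _; rewrite /box_vol (bigD1 i0)//= subrr mul0r.
Qed.

Lemma lebout_box (i0 : I) (a b : I -> R) :
  (forall i, a i <= b i)%R -> lebout (box a b) <= (box_vol a b)%:E.
Proof.
move=> ab; rewrite /lebout; apply: ereal_inf_lbound.
exists (fun k => if k is 0%N then a else b), (fun=> b); split.
- by move=> [|k] i.
- by move=> x abx; exists 0%N.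
rewrite (@nneseries_split _ _ 0 1); last by move=> [|k] _; rewrite lee_fin box_vol_ge0.
rewrite eseries0; last by move=> [|k]//= _ _; rewrite /box_vol (bigD1 i0)//= subrr mul0r.
by rewrite adde0 big_nat1.
Qed.

Lemma lebout_setU (i0 : I) (A B : set (I -> R)) :
  lebout (A `|` B) <= lebout A + lebout B.
Proof.
pose S k := if k == 0%N then A else if k == 1%N then B else set0.
apply: (le_trans (@le_lebout _ (\bigcup_k S k) _)).
  by move=> x [Ax|Bx]; [exists 0%N|exists 1%N].
apply: (le_trans (lebout_sigma_subadditive S)).
rewrite (@nneseries_split _ _ 0 2); last by move=> k _; exact: lebout_ge0.
rewrite [X in _ + X]eseries0; last first.
  by move=> [|[|k]]//= _ _; exact: lebout_set0.
by rewrite adde0 /= big_nat_recr//= big_nat_recr//= big_geq// add0e.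
Qed.

Lemma lebout_markov (g : (I -> R) -> \bar R) (l : R) : (0 < l)%R ->
  l%:E * lebout [set x | l%:E < g x] <= lint g.
Proof.
move=> l0; rewrite /lint.
set phi := fun s : R => lebout [set x | s%:E < g x].
have phi_ge0 s : 0 <= phi s by exact: lebout_ge0.
apply: (@le_trans _ _ (\int[@lebesgue_measure R]_(s in `[0%R, l]) phi s)).
  apply: (@le_trans _ _ (\int[@lebesgue_measure R]_(s in `[0%R, l]) phi l)).
    by rewrite integral_cst//= lebesgue_measure_itv/= lte_fin l0 sube0 muleC.
  apply: ge0_le_integral_nm => s; first by move=> _; exact: phi_ge0.
  rewrite /= in_itv/= => /andP[s0 sl]; apply: le_lebout => x /=.
  by apply: le_lt_trans; rewrite lee_fin.
rewrite integral_mkcond [X in _ <= X]integral_mkcond.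
apply: ge0_le_integral_nm => s _; first exact: erestrict_ge0.
rewrite /patch; case: ifPn => [|_]; last by case: ifPn => // _; exact: phi_ge0.
by rewrite inE /= in_itv/= => /andP[s0 _]; rewrite ifT// inE.
Qed.

Lemma lint_eq0_lebout (g : (I -> R) -> \bar R) : lint g = 0 ->
  lebout [set x | 0 < g x] = 0.
Proof.
move=> g0; apply/eqP; rewrite eq_le lebout_ge0 andbT.
have gt0_cover : [set x | 0 < g x] `<=` \bigcup_k [set x | ((k.+1%:R)^-1)%:E < g x].
  move=> x /= gx0; case gx: (g x) => [a| |] in gx0 *; rewrite ?ltNge ?leNye//; last first.
    by exists 0%N => //=; rewrite gx ltey.
  have a0 : (0 < a)%R by rewrite -lte_fin.
  exists (Num.bound a^-1) => //=; rewrite gx lte_fin invf_plt ?posrE//.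
  apply: lt_le_trans (archi_boundP _) _; first by rewrite invr_ge0 ltW.
  by rewrite ler_nat.
apply: (le_trans (le_lebout gt0_cover)); apply: (le_trans (lebout_sigma_subadditive _)).
rewrite eseries0 // => k _ _; apply/eqP; rewrite eq_le lebout_ge0 andbT.
have k0 : (0 < (k.+1%:R)^-1 :> R)%R by rewrite invr_gt0.
by have := lebout_markov g _ k0; rewrite g0 -lee_pdivlMl// mule0.
Qed.

(* On R^0 every box has volume 1 (an empty product), so no set has finite outer measure. *)
Lemma lebout_card0 (E : set (I -> R)) : #|I| = 0%N -> lebout E = +oo.
Proof.
move=> I0; apply/eqP; rewrite eq_le leey; apply: le_ereal_inf_tmp => _ [a [b [_ _ ->]]].
have vol1 k : box_vol (a k) (b k) = 1%R.
  by rewrite /box_vol big_pred0// => i; have := card0_eq I0 i; rewrite !inE.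
rewrite (@eq_eseriesr _ _ (fun=> 1%:E)); last by move=> k _; rewrite vol1.
rewrite (cvg_lim _ (_ : _ @ \oo --> +oo))// (_ : (fun n => _) = fun n => n%:R%:E).
  exact/cvgenyP.
by apply/funext => n; rewrite sumEFin sumr_const_nat subn0.
Qed.

Lemma lebout_gt_lint_div (g : (I -> R) -> \bar R) (i c : R) : (0 < c)%R ->
  lint g = i%:E -> lebout [set x | (i / c)%:E < g x] <= c%:E.
Proof.
move=> c0 gi; have [i0E|i_neq0] := eqVneq i 0%R.
  by rewrite i0E mul0r lint_eq0_lebout ?gi ?i0E// lee_fin ltW.
have i0 : (0 < i)%R.
  rewrite lt_neqAle eq_sym i_neq0 -lee_fin -gi.
  by apply: integral_ge0 => s _; exact: lebout_ge0.
have := @lebout_markov g _ (divr_gt0 i0 c0); rewrite gi -lee_pdivlMl ?divr_gt0//.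
by rewrite -EFinM invf_div divfK ?gt_eqF.
Qed.

Lemma lebout_gt_Lq_avg (i0 : I) (B D : set (I -> R)) (G : (I -> R) -> \bar R)
    (q rho : R) : (0 < q)%R -> (0 < rho)%R -> lebout B < +oo -> D `<=` B ->
  (forall y, D y -> rho%:E * poweR ((fine (lebout B))^-1%:E *
     lint (fun x => if `[< B x >] then poweR (G x) q else 0%R)) q^-1 < G y) ->
  lebout D <= (powR rho (- q))%:E * lebout B.
Proof.
set g := fun x => _; set T := poweR _ _ => q0 rho0 Blty DB DG.
have [v Bv] := lebout_EFin Blty.
have rhs_ge0 : 0 <= (powR rho (- q))%:E * lebout B.
  by rewrite mule_ge0 ?lee_fin ?powR_ge0 ?lebout_ge0.
have [v0|v_neq0] := eqVneq v 0%R.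
  by apply: le_trans (le_lebout DB) _; rewrite Bv v0 mule0.
have v_gt0 : (0 < v)%R by rewrite lt_neqAle eq_sym v_neq0 -lee_fin -Bv lebout_ge0.
have lint_ge0 : 0 <= lint g by apply: integral_ge0 => s _; exact: lebout_ge0.
have [Too|Tfin] := eqVneq T +oo.
  apply: le_trans rhs_ge0; rewrite -(lebout_set0 i0); apply: le_lebout => y Dy.
  by have := DG y Dy; rewrite -/T Too gt0_muley ?lte_fin// ltNge leey.
have [i gi] : exists i, lint g = i%:E.
  move: Tfin lint_ge0; rewrite /T Bv /=; case: (lint g) => [i| |]//; first by exists i.
  rewrite gt0_muley; last by rewrite lte_fin invr_gt0.
  by rewrite poweRyr ?eqxx// invr_neq0// gt_eqF.
have c_gt0 : (0 < powR rho (- q) * v)%R by rewrite mulr_gt0 ?powR_gt0.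
suff DG' : D `<=` [set x | (i / (powR rho (- q) * v))%R%:E < g x].
  by apply: le_trans (le_lebout DG') _; rewrite Bv -EFinM; exact: lebout_gt_lint_div.
have i_ge0 : (0 <= i)%R by rewrite -lee_fin -gi.
set t := ((v^-1 * i) `^ q^-1)%R.
have rhotq : (i / (powR rho (- q) * v) = (rho * t) `^ q)%R.
  rewrite powRM ?powR_ge0 ?ltW// -powRrM mulVf ?gt_eqF// powRr1; last first.
    by rewrite mulr_ge0// invr_ge0 ltW.
  by rewrite powRN invfM invrK mulrC mulrA.
move=> y Dy; have := DG y Dy.
rewrite rhotq /T gi Bv /= /g (asboolT (DB _ Dy)) -/t -EFinM.
by apply: lte_poweR => //; rewrite mulr_ge0 ?powR_ge0 ?ltW.
Qed.

End lebesgue_outer_measure.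

Section balls.
Local Open Scope ereal_scope.
Context {R : realType} {n : nat}.
Implicit Types (c : 'I_n -> R) (r : R).

Lemma euc_norm_lt (x : 'I_n -> R) r : (0 < r)%R ->
  (euc_norm x < r)%R = (\sum_i x i ^+ 2 < r ^+ 2)%R.
Proof.
move=> r0; rewrite /euc_norm -{1}(ger0_norm (ltW r0)) -sqrtr_sqr ltr_sqrt// exprn_gt0//.
Qed.

Lemma le_coord_euc_norm (x : 'I_n -> R) i : (`|x i| <= euc_norm x)%R.
Proof.
rewrite /euc_norm -sqrtr_sqr ler_sqrt ?sumr_ge0// => [|j _]; last exact: sqr_ge0.
by rewrite (bigD1 i)//= lerDl sumr_ge0// => j _; exact: sqr_ge0.
Qed.

Lemma eball_sub_box c r :
  eball c r `<=` box (fun i => c i - r)%R (fun i => c i + r)%R.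
Proof.
move=> y /= ycr i; have := le_lt_trans (le_coord_euc_norm (fun j => y j - c j)%R i) ycr.
by rewrite ltr_norml => /andP[? ?]; apply/andP; split; lra.
Qed.

Lemma lebout_eball_lty (i0 : 'I_n) c r : (0 < r)%R -> lebout (eball c r) < +oo.
Proof.
move=> r0; apply: (le_lt_trans (le_lebout (eball_sub_box c r))).
apply: (le_lt_trans (lebout_box i0 _ _ _)); last exact: ltry.
by move=> i; rewrite lerD2l; lra.
Qed.

Lemma lebout_eball_scale c r (l : R) : (0 < r)%R -> (0 < l)%R ->
  lebout (eball c (l * r)) <= (l ^+ n)%:E * lebout (eball c r).
Proof.
move=> r0 l0; have ln0 : (0 < l ^+ n)%R by rewrite exprn_gt0.
rewrite -lee_pdivrMl//; apply: le_ereal_inf_tmp => _ [a [b [ab cov ->]]].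
rewrite lee_pdivrMl// -nneseriesZl; last by move=> k _; rewrite lee_fin box_vol_ge0.
pose a' k i := (c i + l * (a k i - c i))%R.
pose b' k i := (c i + l * (b k i - c i))%R.
rewrite /lebout; apply: ereal_inf_lbound; exists a', b'; split.
- by move=> k i; rewrite /a' /b' lerD2l ler_pM2l// lerD2r.
- move=> y /= yB.
  pose y' i := (c i + (y i - c i) / l)%R.
  have : eball c r y'.
    rewrite /eball /= euc_norm_lt// /y'.
    under eq_bigr do rewrite addrC addKr expr_div_n.
    rewrite -mulr_suml ltr_pdivrMr ?exprn_gt0// -exprMn mulrC.
    by rewrite -euc_norm_lt// mulr_gt0.
  move=> /cov [k _ hk]; exists k => // i; rewrite /a' /b'.
  have -> : y i = (c i + l * (y' i - c i))%R.
    by rewrite /y' addrAC subrr add0r mulrC divfK ?gt_eqF// addrC subrK.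
  have /andP[h1 h2] := hk i.
  by rewrite !lerD2l !ler_pM2l// !lerD2r h1 h2.
apply: eq_eseriesr => k _; rewrite -EFinM; congr EFin.
have -> : (l ^+ n = \prod_(i < n) l)%R by rewrite prodr_const card_ord.
rewrite /box_vol -big_split /=.
by apply: eq_bigr => i _; rewrite /a' /b'; ring.
Qed.

End balls.

Lemma ler_forall_gt1_mulrX {R : realType} (x y : R) (k : nat) : 0 <= y ->
  (forall t, 1 < t -> x <= y * t ^+ k) -> x <= y.
Proof.
move=> y0; case: k => [|k] xyt.
  by have := xyt 2%R; rewrite expr0 mulr1; apply; rewrite ltr1n.
apply/ler_addgt0Pr => e e0.
have ey0 : 0 < e / (y + 1) by rewrite divr_gt0// ltr_wpDl.
pose t := (1 + e / (y + 1)) `^ k.+1%:R^-1.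
have tk : t ^+ k.+1 = 1 + e / (y + 1).
  by rewrite -powR_mulrn ?powR_ge0// -powRrM mulVf ?pnatr_eq0// powRr1// addr_ge0// ltW.
have t1 : 1 < t.
  rewrite ltNge; apply/negP => t_le1.
  have := exprn_ile1 k.+1 (powR_ge0 _ _) t_le1.
  by rewrite tk gerDl leNgt ey0.
apply: le_trans (xyt t t1) _; rewrite tk mulrDr mulr1 lerD2l mulrCA.
by rewrite ler_piMr ?ltW// ltr_pdivrMr ?ltr_wpDl// mul1r ltrDl.
Qed.

Section stopping_time.
Context {R : realType} {X : completeNormedModType R[i]} {n : nat}.
Variables (F : ('I_n -> R) -> R -> X) (q rho : R).
Local Open Scope ereal_scope.

Lemma Cq_ge_avg (c y : 'I_n -> R) (s : R) : (0 < s)%R -> eball c s y ->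
  poweR ((fine (lebout (eball c s)))^-1%:E *
    lint (fun x => if `[< eball c s x >] then poweR (Afun F s x) q else 0%R)) q^-1
  <= Cq q F y.
Proof. by move=> s0 csy; apply: ereal_sup_ubound; exists c, s. Qed.

Lemma Afun_gt_stop_time (y : 'I_n -> R) (r s : R) : (r < s)%R -> (0 < s)%R ->
  stop_time q rho F y <= r%:E -> rho%:E * Cq q F y < Afun F s y.
Proof.
move=> rs s0 yr; rewrite ltNge; apply/negP => Afs.
suff : s%:E <= stop_time q rho F y by rewrite leNgt (le_lt_trans yr) ?lte_fin.
by apply: ereal_sup_ubound; exists s.
Qed.

Lemma lebout_stop_time_le_avg (i0 : 'I_n) (c : 'I_n -> R) (r s : R) :
  (0 < q)%R -> (0 < rho)%R -> (0 < s)%R -> (r < s)%R ->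
  lebout (eball c r `&` [set x | stop_time q rho F x <= r%:E]) <=
    (powR rho (- q))%:E * lebout (eball c s).
Proof.
move=> q0 rho0 s0 rs.
apply: (lebout_gt_Lq_avg i0 _ _ _ _ _ q0 rho0 (lebout_eball_lty i0 c s s0)).
  by move=> y [/= cry _]; apply: lt_trans rs.
move=> y [cry yr]; apply: (le_lt_trans _ (Afun_gt_stop_time _ _ _ rs s0 yr)).
apply: lee_wpmul2l; first by rewrite lee_fin (ltW rho0).
by apply: Cq_ge_avg => //; apply: lt_trans rs.
Qed.

Lemma lebout_stop_time_le (i0 : 'I_n) (c : 'I_n -> R) (r : R) :
  (0 < q)%R -> (1 < rho)%R -> (0 < r)%R ->
  lebout (eball c r `&` [set x | stop_time q rho F x <= r%:E]) <=
    (powR rho (- q))%:E * lebout (eball c r).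
Proof.
move=> q0 rho1 r0; have rho0 : (0 < rho)%R by apply: lt_trans rho1.
set D := _ `&` _.
have Blty := lebout_eball_lty i0 c r r0.
have [l Bl] := lebout_EFin Blty.
have [d Dd] : exists d, lebout D = d%:E.
  by apply/lebout_EFin/(le_lt_trans _ Blty)/le_lebout => x [].
have l0 : (0 <= l)%R by rewrite -lee_fin -Bl lebout_ge0.
rewrite Dd Bl -EFinM lee_fin.
apply: (@ler_forall_gt1_mulrX _ _ _ n); first by rewrite mulr_ge0 ?powR_ge0.
move=> t t1; have t0 : (0 < t)%R by apply: lt_trans t1.
rewrite -lee_fin -Dd; apply: (le_trans (lebout_stop_time_le_avg i0 c r (t * r) q0 rho0 _ _)).
- by rewrite mulr_gt0.
- by rewrite ltr_pMl.
rewrite -mulrA EFinM; apply: lee_wpmul2l; first by rewrite lee_fin powR_ge0.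
by apply: (le_trans (lebout_eball_scale c r t r0 t0)); rewrite Bl -EFinM mulrC.
Qed.

End stopping_time.

Theorem lemma4p6 (R : realType) (X : completeNormedModType R[i]) (n : nat)
  (F : ('I_n -> R) -> R -> X) (q rho : R) :
  strongly_meas F -> 0 < q -> 1 < rho ->
  forall (c : 'I_n -> R) (r : R), 0 < r ->
  (((1 - powR rho (- q))%:E * lebout (eball c r)) <=
    lebout (eball c r `&` [set x | (r%:E < stop_time q rho F x)%E]))%E.
Proof.
move=> _ q0 rho1 c r r0.
case: n F c => [|m] F c; first by rewrite [X in (_ <= X)%E]lebout_card0 ?card_ord ?leey.
set B := eball c r; set G := [set x | _].
have := @lebout_stop_time_le _ _ _ F q rho ord0 c r q0 rho1 r0.
set D := _ `&` _ => stop_small.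
have B_split : (lebout B <= lebout (B `&` G) + lebout D)%E.
  apply: le_trans (lebout_setU ord0 _ _); apply: le_lebout => x Bx.
  by case: (leP (stop_time q rho F x) r%:E) => ?; [right|left].
have [l Bl] := lebout_EFin (lebout_eball_lty ord0 c r r0).
case BG: (lebout (B `&` G)) => [M| |]; last by have := lebout_ge0 (B `&` G); rewrite BG.
- move: B_split; rewrite BG Bl => B_split.
  have : (l%:E <= (M + powR rho (- q) * l)%:E)%E.
    by apply: le_trans B_split _; rewrite EFinD leeD2l// EFinM -Bl.
  by rewrite -EFinM !lee_fin; lra.
- by rewrite leey.
Qed.
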